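(* Let $B>0$ and $z>0$, and set $z_0:=\max\left(z,\ \frac{\pi}{B^2 e}\right)$. If $\nu\geq 1$ satisfies $$\nu\;\geq\;\frac12+\frac{\log(B)+z_0-\frac12\log\!\left(\frac{\pi}{z_0 e}\right)}{W_0\!\left(\frac{2}{z_0 e}\left(\log(B)+z_0-\frac12\log\!\left(\frac{\pi}{z_0 e}\right)\right)\right)},$$ then $K_\nu(z)>B$.
   Context: $K_\nu$ denotes the modified Bessel function of the second kind of real order $\nu$, considered for real argument $z>0$. $W_0$ denotes the principal branch of the Lambert $W$ function (the inverse of $w\mapsto we^w$ on $[-1,\infty)$). *)

From Stdlib Require Import Reals ClassicalEpsilon.
From Coquelicot Require Import Coquelicot.
Open Scope R_scope.

(* Modified Bessel function of the second kind, real order nu, argument z > 0,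
   via the standard integral representation (DLMF 10.32.9):
   K_nu(z) = \int_0^\infty exp(-z cosh t) cosh(nu t) dt. *)
Definition BesselK (nu z : R) : R :=
  RInt_gen (fun t => exp (- z * cosh t) * cosh (nu * t))
           (at_point 0) (Rbar_locally p_infty).

(* Principal branch of Lambert W: for x >= -1/e, the unique w >= -1 with
   w * exp w = x (arbitrary value outside the domain). *)
Definition LambertW0 (x : R) : R :=
  epsilon (inhabits 0) (fun w => -1 <= w /\ w * exp w = x).

(* Writing K_nu(z) = int_0^oo exp(-z cosh t) cosh(nu t) dt and
   unfolding the even part, 2 K_nu(z) >= int_R exp(-z0 cosh t + nu t) dt for
   z <= z0.  Restricting to a window [c - h, c + h] and applying Jensen's
   inequality to exp gives K_nu(z) >= h exp(-z0 cosh c sinh h / h + nu c).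
   The window is centred at the saddle point, cosh c = s / z0 with
   s = sqrt(nu^2 + z0^2), and has half-width h = sqrt(pi / (nu + z0)).
   The Lambert condition on nu is equivalent to
   L <= (nu - 1/2) log((2 nu - 1) / (z0 e)), and comparing with log K_nu(z)
   leaves two elementary logarithmic gains, each >= 1/3, which beat the
   sinh-correction (sinh h / h - 1) s <= 0.6515. *)
From Stdlib Require Import Reals Lra Psatz ClassicalEpsilon.
From Coquelicot Require Import Coquelicot.
Open Scope R_scope.

(* pi <= 16/5: otherwise 16/5 would lie in (0, pi], where sin is positive,
   yet the Taylor upper bound for sin at 16/5 is negative. *)
Lemma PI_le_16_5 : PI <= 16/5.
Proof.
  destruct (Rle_or_lt PI (16/5)) as [H|H]; [exact H|exfalso].
  assert (Hub := SIN (16/5) ltac:(lra) ltac:(lra)).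
  assert (Hpos : 0 < sin (16/5)) by (apply sin_gt_0; lra).
  unfold sin_ub, sin_approx in Hub.
  cbv [sum_f_R0 sin_term Nat.mul Nat.add] in Hub.
  rewrite !fact_simpl, !mult_INR in Hub. cbv [Factorial.fact] in Hub.
  rewrite !S_INR, !INR_0 in Hub. simpl pow in Hub.
  lra.
Qed.

Lemma ln_le_sub1 y : 0 < y -> ln y <= y - 1.
Proof.
  intro Hy. pose proof (exp_ineq1_le (ln y)) as H. rewrite exp_ln in H; lra.
Qed.

Lemma nonneg_of_deriv_nonneg (f df : R -> R) (X : R) :
  (forall t, 0 <= t <= X -> is_derive f t (df t)) ->
  (forall t, 0 <= t <= X -> 0 <= df t) -> 0 <= f 0 ->
  forall t, 0 <= t <= X -> 0 <= f t.
Proof.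
  intros Hd Hdf H0 t Ht.
  destruct (MVT_gen f 0 t df) as [c [Hc Heq]].
  - intros x Hx. apply Hd. rewrite Rmin_left, Rmax_right in Hx; lra.
  - intros x Hx. rewrite Rmin_left, Rmax_right in Hx by lra.
    apply continuity_pt_filterlim, (ex_derive_continuous (V := R_NormedModule)).
    eexists. apply Hd; lra.
  - rewrite Rmin_left, Rmax_right in Hc by lra.
    assert (0 <= df c * (t - 0)) by (apply Rmult_le_pos; [apply Hdf|]; lra).
    lra.
Qed.

Lemma ln_1plus_lb x : 0 <= x -> 2 * x / (2 + x) <= ln (1 + x).
Proof.
  intro Hx.
  assert (H := nonneg_of_deriv_nonneg (fun t => ln (1 + t) - 2 * t / (2 + t))
                 (fun t => t ^ 2 / ((1 + t) * (2 + t) ^ 2)) x).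
  simpl in H. rewrite Rplus_0_r, ln_1 in H.
  enough (0 <= ln (1 + x) - 2 * x / (2 + x)) by lra.
  apply H; try lra.
  - intros t Ht. auto_derive; [lra | field; lra].
  - intros t Ht. apply Rmult_le_pos; [nra | apply Rlt_le, Rinv_0_lt_compat; nra].
Qed.

(* One step of repeated integration on [0, 2]: an inequality "0 <= F' "
   lifts to "0 <= F" when F(0) = 0; F, F' built from polynomials, sinh, cosh. *)
Ltac integrate_step prev :=
  refine (nonneg_of_deriv_nonneg _ _ 2 _ prev _);
  [ intros ? ?; unfold sinh, cosh; auto_derive; [easy | simpl; lra]
  | rewrite ?sinh_0, ?cosh_0; lra ].

(* Taylor bound for sinh on [0, 2], obtained by integrating cosh t <= 5.04
   seven times. *)
Lemma sinh_taylor_ub h : 0 <= h <= 2 ->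
  sinh h <= h + h ^ 3 / 6 + h ^ 5 / 120 + h ^ 7 / 1000.
Proof.
  intro Hh.
  assert (D7 : forall t, 0 <= t <= 2 -> 0 <= 5040/1000 - cosh t).
  { intros t Ht. unfold cosh.
    assert (exp t <= exp 1 * exp 1).
    { rewrite <- exp_plus. destruct (Req_dec t 2) as [->|]; [right; f_equal; lra|].
      left; apply exp_increasing; lra. }
    assert (exp (- t) <= 1).
    { rewrite <- exp_0. destruct (Req_dec t 0) as [->|]; [rewrite Ropp_0; lra|].
      left; apply exp_increasing; lra. }
    pose proof exp_le_3. pose proof (exp_pos 1). nra. }
  assert (D6 : forall t, 0 <= t <= 2 -> 0 <= 5040/1000 * t - sinh t)
    by integrate_step D7.
  assert (D5 : forall t, 0 <= t <= 2 -> 0 <= 1 + 2520/1000 * t ^ 2 - cosh t)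
    by integrate_step D6.
  assert (D4 : forall t, 0 <= t <= 2 -> 0 <= t + 840/1000 * t ^ 3 - sinh t)
    by integrate_step D5.
  assert (D3 : forall t, 0 <= t <= 2 ->
            0 <= 1 + t ^ 2 / 2 + 210/1000 * t ^ 4 - cosh t)
    by integrate_step D4.
  assert (D2 : forall t, 0 <= t <= 2 ->
            0 <= t + t ^ 3 / 6 + 42/1000 * t ^ 5 - sinh t)
    by integrate_step D3.
  assert (D1 : forall t, 0 <= t <= 2 ->
            0 <= 1 + t ^ 2 / 2 + t ^ 4 / 24 + 7/1000 * t ^ 6 - cosh t)
    by integrate_step D2.
  assert (D0 : forall t, 0 <= t <= 2 ->
            0 <= t + t ^ 3 / 6 + t ^ 5 / 120 + t ^ 7 / 1000 - sinh t)
    by integrate_step D1.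
  specialize (D0 h Hh). lra.
Qed.

Section DominatedImproperIntegral.

Variables (f : R -> R) (C : R).
Hypothesis f_cont : forall t, continuous f t.
Hypothesis f_nonneg : forall t, 0 <= t -> 0 <= f t.
Hypothesis f_dominated : forall t, 0 <= t -> f t <= C * exp (- t).

Let ex_RInt_f a b : ex_RInt f a b.
Proof. apply (ex_RInt_continuous (V := R_CompleteNormedModule)); auto. Qed.

Lemma RInt_tail_bound M M' : 0 <= M <= M' -> 0 <= RInt f M M' <= C * exp (- M).
Proof.
  intro HM.
  assert (Hdom : is_RInt (fun t => C * exp (- t)) M M'
                   (C * exp (- M) - C * exp (- M'))).
  { replace (C * exp (- M) - C * exp (- M'))
      with (minus (- C * exp (- M')) (- C * exp (- M)))
      by (unfold minus, plus, opp; simpl; ring).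
    apply (is_RInt_derive (fun t => - C * exp (- t))).
    - intros; auto_derive; auto; ring.
    - intros x _. apply (ex_derive_continuous (V := R_NormedModule)).
      auto_derive; auto. }
  split.
  - apply RInt_ge_0; [lra | apply ex_RInt_f | intros; apply f_nonneg; lra].
  - apply Rle_trans with (C * exp (- M) - C * exp (- M')).
    + rewrite <- (is_RInt_unique _ _ _ _ Hdom).
      apply RInt_le; try lra; [auto | eexists; exact Hdom |].
      intros; apply f_dominated; lra.
    + assert (0 <= C) by (pose proof (f_nonneg 0); pose proof (f_dominated 0);
                          rewrite Ropp_0, exp_0 in *; lra).
      pose proof (exp_pos (- M')). nra.
Qed.

Lemma RInt_partial_sup :
  { l | forall M, 0 <= M -> RInt f 0 M <= l <= RInt f 0 M + C * exp (- M) }.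
Proof.
  set (E := fun y => exists M, 0 <= M /\ y = RInt f 0 M).
  destruct (completeness E) as [l [Hub Hlub]].
  - exists C. intros y [M [HM ->]].
    pose proof (RInt_tail_bound 0 M (conj (Rle_refl 0) HM)) as H.
    rewrite Ropp_0, exp_0 in H. lra.
  - exists (RInt f 0 0). exists 0. split; [lra | reflexivity].
  - exists l. intros M HM. split.
    + apply Hub. exists M. split; [lra | reflexivity].
    + apply Hlub. intros y [M' [HM' ->]].
      rewrite <- (RInt_Chasles f 0 M M') by auto.
      change (plus ?x ?y) with (x + y).
      destruct (Rle_or_lt M M').
      * pose proof (RInt_tail_bound M M'). lra.
      * rewrite <- (opp_RInt_swap f M' M) by auto. change (opp ?x) with (- x).
        pose proof (RInt_tail_bound M' M). pose proof (RInt_tail_bound M M).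
        lra.
Qed.

(* The improper integral is the supremum above, hence dominates each partial integral. *)
Lemma RInt_le_RInt_gen M :
  0 <= M -> RInt f 0 M <= RInt_gen f (at_point 0) (Rbar_locally p_infty).
Proof.
  destruct RInt_partial_sup as [l Hl].
  assert (Hgen : is_RInt_gen f (at_point 0) (Rbar_locally p_infty) l).
  { intros P [eps Heps].
    set (M0 := Rmax 0 (ln ((Rabs C + 1) / eps))).
    apply (Filter_prod _ _ _ (fun a => a = 0) (fun b => M0 < b)).
    - reflexivity.
    - exists M0. auto.
    - intros a b -> Hb. exists (RInt f 0 b). split.
      + apply (RInt_correct (V := R_CompleteNormedModule)); auto.
      + apply Heps. change (Rabs (RInt f 0 b - l) < eps).
        assert (Hb0 : 0 <= b) by (pose proof (Rmax_l 0 (ln ((Rabs C + 1) / eps)));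
                                  unfold M0 in Hb; lra).
        assert (Htail : (Rabs C + 1) * exp (- b) < eps).
        { assert (Hlt : ln ((Rabs C + 1) / eps) < b)
            by (pose proof (Rmax_r 0 (ln ((Rabs C + 1) / eps))); unfold M0 in Hb; lra).
          pose proof (cond_pos eps). pose proof (Rabs_pos C).
          apply exp_increasing in Hlt.
          rewrite exp_ln in Hlt by (apply Rdiv_lt_0_compat; lra).
          rewrite exp_Ropp. pose proof (exp_pos b).
          apply (Rmult_lt_reg_r (exp b)); auto.
          rewrite Rmult_assoc, Rinv_l, Rmult_1_r by lra.
          apply (Rmult_lt_compat_l eps) in Hlt; [|lra].
          replace (eps * ((Rabs C + 1) / eps)) with (Rabs C + 1) in Hlt
            by (field; lra).
          lra. }
        destruct (Hl b Hb0).
        pose proof (Rle_abs C). pose proof (exp_pos (- b)).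
        rewrite Rabs_left1; nra. }
  rewrite (is_RInt_gen_unique _ _ Hgen).
  intro HM. apply (Hl M HM).
Qed.

End DominatedImproperIntegral.

Ltac continuity_by_derive :=
  apply (ex_derive_continuous (V := R_NormedModule)); unfold cosh; auto_derive; auto.

Definition bessel_integrand (nu z t : R) : R := exp (- z * cosh t) * cosh (nu * t).

Lemma cosh_pos x : 0 < cosh x.
Proof. unfold cosh. pose proof (exp_pos x). pose proof (exp_pos (- x)). lra. Qed.

Lemma cosh_even x : cosh (- x) = cosh x.
Proof. unfold cosh. rewrite Ropp_involutive. lra. Qed.

(* Exponential decay of the integrand: from cosh t >= e^t/2, cosh(nu t) <= e^(nu t)
   and the tangent bound for ln applied to e^t / (2(nu+1)/z). *)
Lemma bessel_integrand_dominated nu z t : 0 < z -> 0 <= nu -> 0 <= t ->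
  bessel_integrand nu z t <= exp ((nu + 1) * (ln (2 * (nu + 1) / z) - 1)) * exp (- t).
Proof.
  intros Hz Hnu Ht. unfold bessel_integrand.
  assert (Hcnu : cosh (nu * t) <= exp (nu * t)).
  { unfold cosh. assert (exp (- (nu * t)) <= exp (nu * t)).
    { destruct (Req_dec (nu * t) 0) as [E|E]; [rewrite E, Ropp_0; lra|].
      left; apply exp_increasing; nra. }
    lra. }
  assert (Hct : exp t / 2 <= cosh t) by (unfold cosh; pose proof (exp_pos (- t)); lra).
  set (w := 2 * (nu + 1) / z).
  assert (Hw : 0 < w) by (unfold w; apply Rdiv_lt_0_compat; lra).
  assert (Hln : ln (exp t / w) <= exp t / w - 1)
    by (apply ln_le_sub1, Rdiv_lt_0_compat; [apply exp_pos | lra]).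
  rewrite ln_div, ln_exp in Hln by (try apply exp_pos; lra).
  assert (Hw' : (nu + 1) * (exp t / w) = z * (exp t / 2)) by (unfold w; field; lra).
  assert (Hexp : - z * cosh t + nu * t <= (nu + 1) * (ln w - 1) + - t) by nra.
  apply Rle_trans with (exp (- z * cosh t) * exp (nu * t)).
  - apply Rmult_le_compat_l; [left; apply exp_pos | exact Hcnu].
  - rewrite <- !exp_plus. destruct Hexp as [Hlt|Heq].
    + left; apply exp_increasing, Hlt.
    + rewrite Heq; lra.
Qed.

Lemma BesselK_ge_partial nu z M : 0 < z -> 0 <= nu -> 0 <= M ->
  RInt (bessel_integrand nu z) 0 M <= BesselK nu z.
Proof.
  intros Hz Hnu HM.
  apply (RInt_le_RInt_gen _ (exp ((nu + 1) * (ln (2 * (nu + 1) / z) - 1)))); auto.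
  - intros t. unfold bessel_integrand. continuity_by_derive.
  - intros t _. apply Rmult_le_pos; [left; apply exp_pos | left; apply cosh_pos].
  - intros t Ht. apply bessel_integrand_dominated; auto.
Qed.

(* Jensen's inequality for exp on [a, b], via the tangent line of exp at the
   mean value m of phi: exp(x) >= exp(m) (1 + x - m). *)
Lemma exp_jensen (phi Phi : R -> R) a b : a < b ->
  (forall t, is_derive Phi t (phi t)) -> (forall t, continuous phi t) ->
  (b - a) * exp ((Phi b - Phi a) / (b - a)) <= RInt (fun t => exp (phi t)) a b.
Proof.
  intros Hab HPhi Hphi.
  set (m := (Phi b - Phi a) / (b - a)).
  assert (Hcont : forall t, continuous (fun t => exp m * (1 + phi t - m)) t).
  { intros t. apply (continuous_scal_r (exp m) (fun t => 1 + phi t - m)).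
    apply (continuous_minus (fun t => 1 + phi t) (fun _ => m)).
    - apply (continuous_plus (fun _ => 1) phi); [apply continuous_const | apply Hphi].
    - apply continuous_const. }
  assert (Htangent : is_RInt (fun t => exp m * (1 + phi t - m)) a b
                       (exp m * ((1 - m) * (b - a) + (Phi b - Phi a)))).
  { replace (exp m * ((1 - m) * (b - a) + (Phi b - Phi a)))
      with (minus (exp m * ((1 - m) * b + Phi b)) (exp m * ((1 - m) * a + Phi a)))
      by (unfold minus, plus, opp; simpl; ring).
    apply (is_RInt_derive (fun t => exp m * ((1 - m) * t + Phi t))).
    - intros t _. pose proof (is_derive_unique _ _ _ (HPhi t)) as HD.
      auto_derive; [exists (phi t); apply HPhi |].
      change (fun x => Phi x) with Phi. rewrite HD; ring.
    - intros t _. apply Hcont. }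
  replace ((b - a) * exp m) with (exp m * ((1 - m) * (b - a) + (Phi b - Phi a)))
    by (unfold m; field; lra).
  rewrite <- (is_RInt_unique _ _ _ _ Htangent).
  apply RInt_le; [lra | eexists; exact Htangent | |].
  - apply (ex_RInt_continuous (V := R_CompleteNormedModule)). intros t _.
    apply (continuous_comp phi exp); [apply Hphi | continuity_by_derive].
  - intros t _. pose proof (exp_ineq1_le (phi t - m)) as H.
    replace (exp (phi t)) with (exp m * exp (phi t - m))
      by (rewrite <- exp_plus; f_equal; ring).
    apply Rmult_le_compat_l; [left; apply exp_pos | lra].
Qed.

Lemma RInt_reflect (E : R -> R) M : (forall t, continuous E t) ->
  RInt E (- M) 0 = RInt (fun t => E (- t)) 0 M.
Proof.
  intro HE.
  assert (Hex : ex_RInt E (- M) (- 0))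
    by (apply (ex_RInt_continuous (V := R_CompleteNormedModule)); auto).
  destruct Hex as [l Hl].
  pose proof (is_RInt_comp_opp E M 0 l Hl) as Hrefl.
  rewrite Ropp_0 in Hl. rewrite (is_RInt_unique _ _ _ _ Hl).
  apply is_RInt_swap, is_RInt_opp in Hrefl.
  assert (H : is_RInt (fun t => E (- t)) 0 M (opp (opp l))).
  { eapply is_RInt_ext; [|exact Hrefl]. intros. simpl. apply opp_opp. }
  rewrite (is_RInt_unique _ _ _ _ H). symmetry; apply opp_opp.
Qed.

(* Over a symmetric interval, the integral of exp(-Z cosh t + nu t) is at most
   2 K_nu(z) for z <= Z: folding [-M, 0] onto [0, M] produces
   exp(-Z cosh t) (e^(nu t) + e^(-nu t)) <= 2 * bessel_integrand nu z t. *)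
Lemma RInt_symmetric_le_BesselK nu z Z M : 0 < z -> z <= Z -> 0 <= nu -> 0 <= M ->
  RInt (fun t => exp (- Z * cosh t + nu * t)) (- M) M <= 2 * BesselK nu z.
Proof.
  intros Hz HZ Hnu HM.
  set (E := fun t => exp (- Z * cosh t + nu * t)).
  assert (HEc : forall t, continuous E t) by (intros; unfold E; continuity_by_derive).
  assert (HEx : forall x y, ex_RInt E x y)
    by (intros; apply (ex_RInt_continuous (V := R_CompleteNormedModule)); auto).
  assert (Hfold : RInt E (- M) M = RInt (fun t => E t + E (- t)) 0 M).
  { rewrite <- (RInt_Chasles E (- M) 0 M), RInt_reflect by auto.
    rewrite <- (RInt_plus (V := R_CompleteNormedModule));
      [| apply (ex_RInt_continuous (V := R_CompleteNormedModule)); intros;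
         unfold E; continuity_by_derive | auto].
    apply RInt_ext. intros x _. change (plus ?a ?b) with (a + b). lra. }
  assert (Hpoint : forall t, E t + E (- t) <= 2 * bessel_integrand nu z t).
  { intros t. unfold E, bessel_integrand.
    rewrite cosh_even.
    rewrite !exp_plus.
    assert (exp (- Z * cosh t) <= exp (- z * cosh t)).
    { pose proof (cosh_pos t). destruct (Req_dec z Z) as [<-|]; [lra|].
      left; apply exp_increasing; nra. }
    replace (cosh (nu * t)) with ((exp (nu * t) + exp (nu * - t)) / 2)
      by (unfold cosh; replace (nu * - t) with (- (nu * t)) by ring; reflexivity).
    pose proof (exp_pos (nu * t)). pose proof (exp_pos (nu * - t)). nra. }
  rewrite Hfold.
  apply Rle_trans with (RInt (fun t => 2 * bessel_integrand nu z t) 0 M).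
  - apply RInt_le; auto.
    + apply (ex_RInt_continuous (V := R_CompleteNormedModule)). intros.
      unfold E; continuity_by_derive.
    + apply (ex_RInt_continuous (V := R_CompleteNormedModule)). intros.
      unfold bessel_integrand; continuity_by_derive.
  - rewrite (RInt_scal (V := R_CompleteNormedModule)).
    + apply Rmult_le_compat_l; [lra | apply BesselK_ge_partial; auto].
    + apply (ex_RInt_continuous (V := R_CompleteNormedModule)). intros.
      unfold bessel_integrand; continuity_by_derive.
Qed.

(* Window lower bound: for z <= Z and h > 0, restricting the integral to
   [c - h, c + h] and applying Jensen gives
   K_nu(z) >= h exp(-Z cosh c sinh h / h + nu c). *)
Lemma BesselK_window_lb nu z Z c h : 0 < z -> z <= Z -> 0 <= nu -> 0 < h ->
  h * exp (- Z * cosh c * (sinh h / h) + nu * c) <= BesselK nu z.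
Proof.
  intros Hz HZ Hnu Hh.
  set (E := fun t => exp (- Z * cosh t + nu * t)).
  set (M := Rabs c + h).
  assert (HEx : forall x y, ex_RInt E x y).
  { intros. apply (ex_RInt_continuous (V := R_CompleteNormedModule)). intros.
    unfold E; continuity_by_derive. }
  assert (Hjensen := exp_jensen (fun t => - Z * cosh t + nu * t)
                       (fun t => - Z * sinh t + nu * t ^ 2 / 2) (c - h) (c + h)).
  replace ((c + h) - (c - h)) with (2 * h) in Hjensen by ring.
  replace ((- Z * sinh (c + h) + nu * (c + h) ^ 2 / 2 -
            (- Z * sinh (c - h) + nu * (c - h) ^ 2 / 2)) / (2 * h))
    with (- Z * cosh c * (sinh h / h) + nu * c) in Hjensen.
  2:{ unfold sinh, cosh. replace (- (c + h)) with (- c + - h) by ring.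
      replace (- (c - h)) with (- c + h) by ring. replace (c - h) with (c + - h) by ring.
      rewrite !exp_plus. field. lra. }
  assert (Hwin : 2 * h * exp (- Z * cosh c * (sinh h / h) + nu * c)
                 <= RInt E (c - h) (c + h)).
  { apply Hjensen; [lra | | intros; continuity_by_derive].
    intros t. unfold sinh, cosh. auto_derive; auto. simpl. field. }
  assert (Hwide : RInt E (c - h) (c + h) <= RInt E (- M) M).
  { assert (HEpos : forall x y, x <= y -> 0 <= RInt E x y)
      by (intros; apply RInt_ge_0; [lra | apply HEx | intros; left; apply exp_pos]).
    pose proof (Rle_abs c). pose proof (Rle_abs (- c)). rewrite Rabs_Ropp in *.
    rewrite <- (RInt_Chasles E (- M) (c - h) M), <- (RInt_Chasles E (c - h) (c + h) M)
      by auto.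
    repeat change (plus ?x ?y) with (x + y).
    assert (0 <= RInt E (- M) (c - h)) by (apply HEpos; unfold M; lra).
    assert (0 <= RInt E (c + h) M) by (apply HEpos; unfold M; lra).
    lra. }
  assert (HM : 0 <= M) by (unfold M; pose proof (Rabs_pos c); lra).
  pose proof (RInt_symmetric_le_BesselK nu z Z M Hz HZ Hnu HM). fold E in H.
  lra.
Qed.

(* On (0, +oo), W0 is positive and inverts w -> w e^w; existence of the root
   comes from the intermediate value theorem on [0, x]. *)
Lemma LambertW0_pos_spec x : 0 < x ->
  0 < LambertW0 x /\ LambertW0 x * exp (LambertW0 x) = x.
Proof.
  intro Hx.
  assert (Hex : exists w, -1 <= w /\ w * exp w = x).
  { destruct (IVT (fun w => w * exp w - x) 0 x) as [w [Hw Hroot]].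
    - apply derivable_continuous. reg.
    - lra.
    - rewrite exp_0. lra.
    - pose proof (exp_ineq1 x ltac:(lra)). nra.
    - exists w. split; lra. }
  destruct (epsilon_spec (inhabits 0) (fun w => -1 <= w /\ w * exp w = x) Hex)
    as [_ Hroot].
  unfold LambertW0. split; [|exact Hroot].
  set (w := epsilon (inhabits 0) (fun w => -1 <= w /\ w * exp w = x)) in *.
  pose proof (exp_pos w). destruct (Rle_or_lt w 0); nra.
Qed.

(* If a >= L / W0(p L), then L <= a log(p a): with W = W0(p L) one has
   e^W = p L / W <= p a, i.e. W <= log(p a). *)
Lemma lambert_threshold p L a : 0 < p -> 0 < L ->
  L / LambertW0 (p * L) <= a -> L <= a * ln (p * a).
Proof.
  intros Hp HL Ha.
  destruct (LambertW0_pos_spec (p * L)) as [HW HWe]; [nra|].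
  set (W := LambertW0 (p * L)) in *.
  assert (HLW : 0 < L / W) by (apply Rdiv_lt_0_compat; lra).
  assert (HeW : exp W <= p * a).
  { replace (exp W) with (p * (L / W)) by (field_simplify_eq; lra).
    apply Rmult_le_compat_l; lra. }
  assert (HWln : W <= ln (p * a)).
  { rewrite <- (ln_exp W). apply ln_le; [apply exp_pos | exact HeW]. }
  replace L with (L / W * W) at 1 by (field; lra).
  apply Rmult_le_compat; lra.
Qed.

Lemma ln_div_e p q : 0 < p -> 0 < q -> ln (p / (q * exp 1)) = ln p - ln q - 1.
Proof.
  intros Hp Hq. pose proof (exp_pos 1).
  rewrite ln_div, ln_mult, ln_exp by nra. ring.
Qed.

Lemma sqrt_sum_sq_bounds x y : 0 <= x -> 0 <= y ->
  let s := sqrt (x ^ 2 + y ^ 2) in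
  s * s = x ^ 2 + y ^ 2 /\ x <= s /\ y <= s /\ s <= x + y.
Proof.
  intros Hx Hy s.
  assert (Hs2 : s * s = x ^ 2 + y ^ 2) by (apply sqrt_sqrt; nra).
  assert (Hs0 : 0 <= s) by apply sqrt_pos.
  repeat split; nra.
Qed.

Lemma sinhc_excess N s : 1 <= N -> 0 < s <= N ->
  (sinh (sqrt (PI / N)) / sqrt (PI / N) - 1) * s <= 6515/10000.
Proof.
  intros HN Hs.
  pose proof PI_RGT_0. pose proof PI_le_16_5.
  set (h := sqrt (PI / N)).
  assert (Hh : 0 < h) by (apply sqrt_lt_R0, Rdiv_lt_0_compat; lra).
  assert (Hh2 : h * h * N = PI)
    by (unfold h; rewrite sqrt_sqrt by (apply Rlt_le, Rdiv_lt_0_compat; lra); field; lra).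
  assert (Hh2le : h * h <= PI) by nra.
  set (P := h ^ 2 / 6 + h ^ 4 / 120 + h ^ 6 / 1000).
  assert (HqP : sinh h / h - 1 <= P).
  { pose proof (sinh_taylor_ub h ltac:(nra)).
    apply (Rmult_le_reg_r h); auto.
    replace ((sinh h / h - 1) * h) with (sinh h - h) by (field; lra).
    unfold P. lra. }
  assert (HPN : P * N = PI / 6 + PI * (h * h) / 120 + PI * (h * h) ^ 2 / 1000).
  { unfold P. rewrite <- Hh2. field. }
  assert (HP0 : 0 <= P) by (unfold P; nra).
  assert ((sinh h / h - 1) * s <= P * N).
  { destruct (Rle_or_lt 0 (sinh h / h - 1)); [apply Rle_trans with (P * s)|]; nra. }
  assert (PI * (h * h) <= 16/5 * (16/5)) by (apply Rmult_le_compat; nra).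
  assert (PI * (h * h) ^ 2 <= 16/5 * (16/5) ^ 2)
    by (apply Rmult_le_compat; try nra; apply pow_incr; nra).
  lra.
Qed.

(* Gain from the order: (nu - 1/2) log((nu + s) / (2 nu - 1)) >= 1/3 for
   s >= nu >= 1, since log(1 + 1/(2a)) >= 2 / (4a + 1) with a = nu - 1/2. *)
Lemma log_gain_order nu s : 1 <= nu -> nu <= s ->
  1/3 <= (nu - /2) * (ln (nu + s) - ln (2 * (nu - /2))).
Proof.
  intros Hnu Hs. set (a := nu - /2).
  assert (Hmono : ln (2 * nu) <= ln (nu + s)) by (apply ln_le; lra).
  replace (2 * nu) with (2 * a * (1 + / (2 * a))) in Hmono by (unfold a; field; lra).
  rewrite ln_mult in Hmono
    by (try apply Rplus_lt_0_compat; try apply Rinv_0_lt_compat; unfold a; lra).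
  pose proof (ln_1plus_lb (/ (2 * a))
                ltac:(apply Rlt_le, Rinv_0_lt_compat; unfold a; lra)) as Hln.
  replace (2 * / (2 * a) / (2 + / (2 * a))) with (2 / (4 * a + 1)) in Hln
    by (unfold a; field; lra).
  assert (1/3 <= a * (2 / (4 * a + 1))).
  { replace (a * (2 / (4 * a + 1))) with (1/3 + (2 * a - 1) / (3 * (4 * a + 1)))
      by (unfold a; field; lra).
    assert (0 <= (2 * a - 1) / (3 * (4 * a + 1)))
      by (apply Rdiv_le_0_compat; unfold a; lra).
    lra. }
  assert (0 < a) by (unfold a; lra).
  nra.
Qed.

(* Gain from the argument: with s = sqrt(nu^2 + z0^2),
   (1/2) log((nu + s) / (nu + z0)) + (nu + z0 - s) >= 1/3, from log 2 >= 2/3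
   and log y <= y - 1 at y = 2 (nu + z0) / (nu + s). *)
Lemma log_gain_argument nu z0 : 1 <= nu -> 0 < z0 ->
  let s := sqrt (nu ^ 2 + z0 ^ 2) in
  1/3 <= / 2 * (ln (nu + s) - ln (nu + z0)) + (nu + z0 - s).
Proof.
  intros Hnu Hz0 s.
  destruct (sqrt_sum_sq_bounds nu z0 ltac:(lra) ltac:(lra)) as [Hs2 [Hsnu [Hsz Hsu]]].
  fold s in Hs2, Hsnu, Hsz, Hsu.
  pose proof (ln_1plus_lb 1 ltac:(lra)) as Hln2. replace (1 + 1) with 2 in Hln2 by ring.
  set (y := 2 * (nu + z0) / (nu + s)).
  assert (Hy : 0 < y) by (unfold y; apply Rdiv_lt_0_compat; lra).
  pose proof (ln_le_sub1 y Hy) as Hln.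
  unfold y in Hln. rewrite ln_div, ln_mult in Hln by lra.
  assert (2 * (nu + z0) / (nu + s) - 1 <= 2 * (nu + z0 - s)).
  { apply (Rmult_le_reg_r (nu + s)); [lra|].
    replace ((2 * (nu + z0) / (nu + s) - 1) * (nu + s)) with (nu + 2 * z0 - s)
      by (field; lra).
    nra. }
  lra.
Qed.

(* Saddle-point lower bound: the window of half-width h = sqrt(pi/(nu + z0))
   centred at c with cosh c = s / z0, where s = sqrt(nu^2 + z0^2). *)
Lemma BesselK_saddle_lb nu z z0 : 1 <= nu -> 0 < z -> z <= z0 ->
  let s := sqrt (nu ^ 2 + z0 ^ 2) in
  0 < BesselK nu z /\
  / 2 * (ln PI - ln (nu + z0)) - s - 6515/10000 + nu * (ln (nu + s) - ln z0)
    <= ln (BesselK nu z).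
Proof.
  intros Hnu Hz Hzz0 s.
  pose proof PI_RGT_0.
  destruct (sqrt_sum_sq_bounds nu z0 ltac:(lra) ltac:(lra)) as [Hs2 [Hsnu [Hsz Hsu]]].
  fold s in Hs2, Hsnu, Hsz, Hsu.
  set (c := ln ((nu + s) / z0)).
  set (h := sqrt (PI / (nu + z0))).
  assert (Hh : 0 < h) by (apply sqrt_lt_R0, Rdiv_lt_0_compat; lra).
  assert (Hcosh : cosh c = s / z0).
  { unfold cosh, c. rewrite exp_Ropp, exp_ln by (apply Rdiv_lt_0_compat; lra).
    field_simplify_eq; [nra | split; lra]. }
  pose proof (BesselK_window_lb nu z z0 c h Hz Hzz0 ltac:(lra) Hh) as Hwin.
  rewrite Hcosh in Hwin.
  replace (- z0 * (s / z0) * (sinh h / h)) with (- s * (sinh h / h)) in Hwin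
    by (field; lra).
  pose proof (sinhc_excess (nu + z0) s ltac:(lra) ltac:(lra)) as Hexcess. fold h in Hexcess.
  assert (Hpos : 0 < h * exp (- s * (sinh h / h) + nu * c))
    by (apply Rmult_lt_0_compat; [lra | apply exp_pos]).
  split; [lra|].
  apply ln_le in Hwin; [|exact Hpos].
  rewrite ln_mult, ln_exp in Hwin by (try apply exp_pos; lra).
  assert (Hlnh : ln h = / 2 * (ln PI - ln (nu + z0))).
  { unfold h. rewrite <- ln_div by lra.
    pose proof (sqrt_lt_R0 (PI / (nu + z0)) ltac:(apply Rdiv_lt_0_compat; lra)).
    rewrite <- (sqrt_sqrt (PI / (nu + z0))) at 2
      by (apply Rlt_le, Rdiv_lt_0_compat; lra).
    rewrite ln_mult by lra. field. }
  assert (Hc : c = ln (nu + s) - ln z0) by (unfold c; apply ln_div; lra).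
  rewrite Hlnh, Hc in Hwin. lra.
Qed.

(* With z0 >= pi / (B^2 e) the threshold numerator L is at least z0 > 0,
   since then log(pi / (z0 e)) <= log(B^2). *)
Lemma threshold_numerator_ge B z0 : 0 < B -> 0 < z0 -> PI / (B ^ 2 * exp 1) <= z0 ->
  z0 <= ln B + z0 - / 2 * ln (PI / (z0 * exp 1)).
Proof.
  intros HB Hz0 Hz0B.
  pose proof PI_RGT_0. pose proof (exp_pos 1).
  assert (HB2 : 0 < B ^ 2) by (apply pow_lt; lra).
  assert (Hlog : ln (PI / (B ^ 2 * exp 1)) <= ln z0)
    by (apply ln_le; [apply Rdiv_lt_0_compat, Rmult_lt_0_compat | exact Hz0B]; lra).
  rewrite ln_div_e in Hlog by lra. rewrite ln_div_e by lra.
  replace (B ^ 2) with (B * B) in Hlog by ring. rewrite ln_mult in Hlog by lra.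
  lra.
Qed.

Theorem proposition1 (B z nu : R) (hB : 0 < B) (hz : 0 < z) (hnu : 1 <= nu) :
  let z0 := Rmax z (PI / (B ^ 2 * exp 1)) in
  let L := ln B + z0 - / 2 * ln (PI / (z0 * exp 1)) in
  nu >= / 2 + L / LambertW0 (2 / (z0 * exp 1) * L) ->
  BesselK nu z > B.
Proof.
  intros z0 L Hnu_thr.
  pose proof PI_RGT_0. pose proof (exp_pos 1).
  assert (Hzz0 : z <= z0) by apply Rmax_l.
  assert (HL : z0 <= L) by (apply threshold_numerator_ge; [lra | lra | apply Rmax_r]).
  (* The Lambert condition on nu turns into L <= (nu - 1/2) log((2nu - 1) / (z0 e)). *)
  assert (HLa := lambert_threshold (2 / (z0 * exp 1)) L (nu - / 2)
                   ltac:(apply Rdiv_lt_0_compat; nra) ltac:(lra) ltac:(lra)).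
  replace (2 / (z0 * exp 1) * (nu - / 2)) with (2 * (nu - / 2) / (z0 * exp 1))
    in HLa by (field; lra).
  unfold L in HLa. rewrite !ln_div_e in HLa by lra.
  destruct (BesselK_saddle_lb nu z z0 hnu hz Hzz0) as [HKpos HK].
  pose proof (log_gain_argument nu z0 hnu ltac:(lra)) as Hgain_arg.
  set (s := sqrt (nu ^ 2 + z0 ^ 2)) in *.
  destruct (sqrt_sum_sq_bounds nu z0 ltac:(lra) ltac:(lra)) as [_ [Hs _]]. fold s in Hs.
  pose proof (log_gain_order nu s hnu Hs) as Hgain_ord.
  (* The two gains (each >= 1/3) beat the sinh-correction 0.6515. *)
  assert (Hlog : ln B < ln (BesselK nu z)) by lra.
  apply exp_increasing in Hlog. rewrite !exp_ln in Hlog by lra. lra.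
Qed.
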